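(* Let $G$ be a graph with vertices labelled $1,\dots,n$, let $A$ be a normal subgroup of $\mathbb{Z}_2^{*V(G)}$ that is $\mathrm{End}\,G$-invariant (i.e. $\phi(A)\subset A$ for every graph homomorphism $\phi\colon G\to G$), and let $\Gamma=\mathbb{Z}_2^{*V(G)}/A$. Then there exists a group-theoretical graph category $\mathscr{C}$ such that $\mathscr{C}^G$ is the representation category of the quantum group $\mathbb{G}=\hat\Gamma\rtimes\mathrm{Aut}\,G$, i.e. $\mathscr{C}^G(k,l)=\mathrm{Mor}(u^{\otimes k},u^{\otimes l})$ for all $k,l\in\mathbb{N}_0$, where $u$ is the fundamental representation of $\mathbb{G}$.
   Context: Graphs are finite, undirected, without multiple edges, loops allowed, up to isomorphism; $N_k$ is the edgeless graph on $k$ vertices; graph homomorphisms map edges (including loops) to edges, and a vertex map $\phi$ induces a homomorphism of the groups $\mathbb{Z}_2^{*V}$ (generated by $V$ subject to $v^2=e$), also denoted $\phi$. A bilabelled graph is $(K,\mathbf{a},\mathbf{b})$ with $\mathbf{a}\in V(K)^k$, $\mathbf{b}\in V(K)^l$, up to isomorphism preserving tuples; $\mathscr{C}(k,l)$ those with $k$ inputs, $l$ outputs. Operations: tensor product $(K,\mathbf{a},\mathbf{b})\otimes(H,\mathbf{c},\mathbf{d})=(K\sqcup H,\mathbf{a}\mathbf{c},\mathbf{b}\mathbf{d})$; composition (for $|\mathbf{b}|=|\mathbf{c}|$) $(H,\mathbf{c},\mathbf{d})\cdot(K,\mathbf{a},\mathbf{b})=(H\cdot K,\mathbf{a},\mathbf{d})$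 with $H\cdot K$ the quotient of $K\sqcup H$ identifying $b_i$ with $c_i$ (edges between quotient vertices iff between some representatives); involution swaps the tuples. For a partition $\pi$ of $V(K)$, $K/\pi$ has the blocks as vertices with an edge between two (possibly equal) blocks iff $K$ has one between some of their elements, and $(K,\mathbf{a},\mathbf{b})/\pi=(K/\pi,q_\pi(\mathbf{a}),q_\pi(\mathbf{b}))$ with $q_\pi$ the quotient map. A graph category is a set of bilabelled graphs containing $(N_0,\emptyset,\emptyset)$, $(M,(v),(v))$, $(M,\emptyset,(v,v))$ ($M$ the one-vertex loopless graph with vertex $v$) and closed under tensor products, compositions and involution; it is group-theoretical if also closed under all quotients $\mathbf{K}\mapsto\mathbf{K}/\pi$. $\hat T^G_{(K,\mathbf{a},\mathbf{b})}\colon(\mathbb{C}^n)^{\otimes k}\to(\mathbb{C}^n)^{\otimes l}$ has $(\mathbf{j},\mathbf{i})$-entry $\#\{\phi\colon K\to G\text{ injective homomorphism}\mid\phi(\mathbf{a})=\mathbf{i},\phi(\mathbf{b})=\mathbf{j}\}$ and $\mathscr{C}^G(k,l)=\mathrm{span}\{\hat T^G_{\mathbf{K}}\mid\mathbf{K}\in\mathscr{C}(k,l)\}$. Quantum groups: for an orthogonal compact matrix quantum group $(O(\mathbb{G}),u)$, $\mathrm{Mor}(u^{\otimes k},u^{\otimes l})=\{T\mid Tu^{\otimes k}=u^{\otimes l}T\}$. A permutation group $H\subset S_n$ is $(O(H),v)$ with $v_{ij}(\sigma)=\delta_{i\sigma(j)}$; $\mathrm{Aut}\,G\subset S_n$ via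 the labelling. For $\Gamma$ a quotient of $\mathbb{Z}_2^{*n}$ by an $H$-invariant normal subgroup, with $\gamma_i\in\mathbb{C}\Gamma$ the images of the generators, $\hat\Gamma\rtimes H$ is $(\mathbb{C}\Gamma\otimes O(H),u)$ with $u_{ij}=\gamma_i\otimes v_{ij}$. *)

From mathcomp Require Import all_boot all_algebra all_fingroup.
From mathcomp Require Import complex Rstruct boolp.
Set Implicit Arguments. Unset Strict Implicit. Unset Printing Implicit Defensive.
Import GRing.Theory Num.Theory.
Local Open Scope ring_scope.

Definition CC : numClosedFieldType := (Rdefinitions.R)[i].

(* The group Z_2^{* n} (free product of n copies of Z_2), realised as  *)
(* reduced words over 'I_n (no two adjacent letters equal).            *)
Section Z2free.
Variable n : nat.

Definition reducedb (w : seq 'I_n) : bool := sorted (fun x y => x != y) w.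

Definition reduce_cons (x : 'I_n) (w : seq 'I_n) : seq 'I_n :=
  if w is y :: w' then (if x == y then w' else x :: w) else [:: x].

(* free reduction using the relations v^2 = e *)
Definition reduce (w : seq 'I_n) : seq 'I_n := foldr reduce_cons [::] w.

Lemma reduce_ok (w : seq 'I_n) : reducedb (reduce w).
Proof.
rewrite /reducedb; elim: w => [|x w IH] //=.
case: (reduce w) IH => [|y w'] //= H.
case: eqP => [_|/eqP ne] /=.
  by case: w' H => //= z w'' /andP[].
by rewrite ne H.
Qed.

Definition Z2free := {w : seq 'I_n | reducedb w}.

Definition zone : Z2free := exist _ [::] isT.
Definition zmul (x y : Z2free) : Z2free :=
  exist _ (reduce (proj1_sig x ++ proj1_sig y)) (reduce_ok _).
(* inverse of a product of involutions = reversed word *)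
Definition zinv (x : Z2free) : Z2free :=
  exist _ (reduce (rev (proj1_sig x))) (reduce_ok _).
Definition zword (p : seq 'I_n) : Z2free := exist _ (reduce p) (reduce_ok _).
Definition zmap (phi : 'I_n -> 'I_n) (x : Z2free) : Z2free :=
  exist _ (reduce (map phi (proj1_sig x))) (reduce_ok _).

Definition normal_subgroup (A : Z2free -> Prop) : Prop :=
  [/\ A zone,
      (forall x y, A x -> A y -> A (zmul x y)),
      (forall x, A x -> A (zinv x)) &
      (forall x y, A x -> A (zmul (zmul (zinv y) x) y))].

End Z2free.

Definition ghom (n : nat) (adj : rel 'I_n) (phi : 'I_n -> 'I_n) : Prop :=
  forall x y, adj x y -> adj (phi x) (phi y).

Definition End_invariant (n : nat) (adj : rel 'I_n) (A : Z2free n -> Prop) :=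
  forall phi : 'I_n -> 'I_n, ghom adj phi -> forall x, A x -> A (zmap phi x).

Definition isAut (n : nat) (adj : rel 'I_n) (s : {perm 'I_n}) : Prop :=
  forall x y, adj (s x) (s y) = adj x y.

(* Bilabelled graphs.  Vertices 'I_m; an undirected edge {x,y}         *)
(* (possibly a loop) is present iff  bg_adj x y || bg_adj y x.         *)
Record bgraph := BGraph {
  bg_m : nat;
  bg_adj : rel 'I_bg_m;
  bg_in : seq 'I_bg_m;
  bg_out : seq 'I_bg_m
}.

Arguments bg_adj : clear implicits.
Arguments bg_in : clear implicits.
Arguments bg_out : clear implicits.

Definition sadj (K : bgraph) : rel 'I_(bg_m K) :=
  fun x y => bg_adj K x y || bg_adj K y x.
Arguments sadj : clear implicits.

Definition bg_iso (K K' : bgraph) : Prop :=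
  exists f : 'I_(bg_m K) -> 'I_(bg_m K'),
    [/\ bijective f,
        (forall x y, sadj K' (f x) (f y) = sadj K x y),
        map f (bg_in K) = bg_in K' &
        map f (bg_out K) = bg_out K'].

Definition inC (k l : nat) (K : bgraph) : bool :=
  (size (bg_in K) == k) && (size (bg_out K) == l).

Definition dunion_adj (m1 m2 : nat) (e1 : rel 'I_m1) (e2 : rel 'I_m2)
  : rel 'I_(m1 + m2) :=
  fun x y => match split x, split y with
             | inl a, inl b => e1 a b
             | inr a, inr b => e2 a b
             | _, _ => false end.

Definition bg_tensor (K H : bgraph) : bgraph :=
  @BGraph (bg_m K + bg_m H) (dunion_adj (sadj K) (sadj H))
    (map (@lshift _ _) (bg_in K) ++ map (@rshift _ _) (bg_in H))
    (map (@lshift _ _) (bg_out K) ++ map (@rshift _ _) (bg_out H)).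

Definition bg_inv (K : bgraph) : bgraph :=
  @BGraph (bg_m K) (bg_adj K) (bg_out K) (bg_in K).

(* quotient K/pi, where the partition pi is given by a surjection q
   onto a set 'I_r of block labels *)
Definition bg_quot (K : bgraph) (r : nat) (q : 'I_(bg_m K) -> 'I_r) : bgraph :=
  @BGraph r (fun x y => [exists u, exists v, (q u == x) && (q v == y) && sadj K u v])
    (map q (bg_in K)) (map q (bg_out K)).

Arguments bg_quot K {r} q.

Definition surj (A B : Type) (f : A -> B) : Prop := forall y, exists x, f x = y.

(* K sqcup H with inputs a (of K) and outputs d (of H), before identification *)
Definition comp_base (H K : bgraph) : bgraph :=
  @BGraph (bg_m K + bg_m H) (dunion_adj (sadj K) (sadj H))
    (map (@lshift _ _) (bg_in K)) (map (@rshift _ _) (bg_out H)).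

Definition comp_rel (H K : bgraph) : rel 'I_(bg_m K + bg_m H) :=
  fun x y =>
    let z := zip (map (@lshift _ (bg_m H)) (bg_out K))
                 (map (@rshift (bg_m K) _) (bg_in H)) in
    ((x, y) \in z) || ((y, x) \in z).

Arguments comp_rel : clear implicits.
Arguments comp_base : clear implicits.

Definition is_comp (H K R : bgraph) : Prop :=
  size (bg_out K) = size (bg_in H) /\
  exists r (q : 'I_(bg_m K + bg_m H) -> 'I_r),
    [/\ surj q,
        (forall x y, (q x == q y) = connect (comp_rel H K) x y) &
        bg_iso (bg_quot (comp_base H K) q) R].

Definition M_vv  : bgraph := @BGraph 1 (fun _ _ => false) [:: ord0] [:: ord0].
Definition M_0vv : bgraph := @BGraph 1 (fun _ _ => false) [::] [:: ord0; ord0].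
Definition N_0   : bgraph := @BGraph 0 (fun _ _ => false) [::] [::].

Definition graph_category (C : bgraph -> Prop) : Prop :=
  [/\ (forall K K', C K -> bg_iso K K' -> C K'),
      C N_0 /\ C M_vv /\ C M_0vv,
      (forall K H, C K -> C H -> C (bg_tensor K H)),
      (forall H K R, C H -> C K -> is_comp H K R -> C R) &
      (forall K, C K -> C (bg_inv K))].

Definition group_theoretical (C : bgraph -> Prop) : Prop :=
  graph_category C /\
  forall K r (q : 'I_(bg_m K) -> 'I_r), surj q -> C K -> C (bg_quot K q).

(* The maps hat T^G_K and the spaces C^G(k,l).  A linear map           *)
(* (C^n)^{(x)k} -> (C^n)^{(x)l} is a matrix indexed by (j, i) with     *)
(* j : l.-tuple 'I_n (row) and i : k.-tuple 'I_n (column).             *)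
Definition TG (n : nat) (adjG : rel 'I_n) (K : bgraph) (j i : seq 'I_n) : CC :=
  (#|[set phi : {ffun 'I_(bg_m K) -> 'I_n} |
        [&& injectiveb phi,
            [forall x, forall y, sadj K x y ==> adjG (phi x) (phi y)],
            map phi (bg_in K) == i &
            map phi (bg_out K) == j]]|)%:R.

Definition CG (n : nat) (adjG : rel 'I_n) (C : bgraph -> Prop) (k l : nat)
  (T : l.-tuple 'I_n -> k.-tuple 'I_n -> CC) : Prop :=
  exists (N : nat) (c : 'I_N -> CC) (Ks : 'I_N -> bgraph),
    (forall x, C (Ks x) /\ inC k l (Ks x)) /\
    forall j i, T j i = \sum_(x < N) c x * TG adjG (Ks x) (val j) (val i).

(* O(G) = C Gamma (x) O(Aut G); an element is determined by its        *)
(* coefficients at (sigma, [g]) for sigma in Aut G and [g] in Gamma    *)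
(* (O(Aut G) = functions on Aut G, C Gamma = free vector space on      *)
(* Gamma).  ucoef A p i s g is this coefficient of the entry           *)
(*   (u^{(x)k})_{p,i} = u_{p1 i1} ... u_{pk ik}                        *)
(*     = gamma_{p1}...gamma_{pk} (x) v_{p1 i1} ... v_{pk ik},           *)
(* with v_{pi}(s) = delta_{p, s(i)}.                                   *)
Definition inGamma_class (n : nat) (A : Z2free n -> Prop) (w g : Z2free n) : bool :=
  asbool (A (zmul w (zinv g))).

Definition ucoef (n : nat) (A : Z2free n -> Prop) (k : nat) (p i : k.-tuple 'I_n)
  (s : {perm 'I_n}) (g : Z2free n) : CC :=
  (inGamma_class A (zword p) g)%:R *
  \prod_(m < k) (tnth p m == s (tnth i m))%:R.

Definition Mor (n : nat) (adjG : rel 'I_n) (A : Z2free n -> Prop) (k l : nat)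
  (T : l.-tuple 'I_n -> k.-tuple 'I_n -> CC) : Prop :=
  forall (j : l.-tuple 'I_n) (i : k.-tuple 'I_n) (s : {perm 'I_n}) (g : Z2free n),
    isAut adjG s ->
    \sum_(p : k.-tuple 'I_n) T j p * ucoef A p i s g =
    \sum_(q : l.-tuple 'I_n) ucoef A j q s g * T q i.

From mathcomp Require Import all_boot all_algebra all_fingroup.
From mathcomp Require Import complex Rstruct boolp.

Set Implicit Arguments. Unset Strict Implicit. Unset Printing Implicit Defensive.
Import GRing.Theory Num.Theory.

(* Let C be the class of bilabelled graphs (K, a, b) such that
   gamma_phi(b) = gamma_phi(a) in Gamma for every homomorphism phi : K -> G.
   A homomorphism out of a quotient, tensor product or composition induces
   homomorphisms out of its pieces, so C is a group-theoretical category since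
   A is normal.  An operator T is an intertwiner of u iff it is Aut G-invariant
   and T_(j,i) = 0 unless gamma_j = gamma_i, and every T^G_K with K in C has
   these two properties.  Conversely, such a T equals its average over Aut G,
   which is a combination of the maps T^G_(G,i,j) with gamma_j = gamma_i: these
   graphs lie in C because A is End G-invariant, and T^G_(G,i,j) counts the
   automorphisms carrying (i, j) to the given indices, since an injective
   endomorphism of a finite graph is an automorphism. *)

Section FreeReduction.
Variable n : nat.
Implicit Types (x : 'I_n) (u v w : seq 'I_n).

Lemma reducedb_behead x w : reducedb (x :: w) -> reducedb w.
Proof. by case: w => //= y w /andP[]. Qed.

Lemma reduce_consK x w : reducedb w -> reduce_cons x (reduce_cons x w) = w.
Proof.
case: w => [|y w] /=; first by rewrite eqxx.
case: eqP => [<-|/eqP ne] reduced_w; last by rewrite /= eqxx.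
by case: w reduced_w => [|z w] //= /andP[/negbTE ->].
Qed.

Lemma reduce_id w : reducedb w -> reduce w = w.
Proof.
elim: w => [|x w IHw] //= reduced_xw.
rewrite IHw ?(reducedb_behead reduced_xw) //.
by case: w reduced_xw {IHw} => //= y w /andP[/negbTE ->].
Qed.

Lemma reduce_catE u v : reduce (u ++ v) = foldr (@reduce_cons n) (reduce v) u.
Proof. by rewrite /reduce foldr_cat. Qed.

Lemma foldr_reduce_cons_reduce u w : reducedb w ->
  foldr (@reduce_cons n) w u = foldr (@reduce_cons n) w (reduce u).
Proof.
move=> reduced_w; elim: u => [|x u IHu] //=; rewrite IHu.
case: (reduce u) (reduce_ok u) => [|y r] //= reduced_yr.
case: eqP => [<-|_] //=; apply: reduce_consK.
by rewrite -(reduce_id reduced_w) -reduce_catE reduce_ok.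
Qed.

Lemma reduce_cat u v : reduce (u ++ v) = reduce (reduce u ++ reduce v).
Proof.
by rewrite !reduce_catE (reduce_id (reduce_ok v)) -foldr_reduce_cons_reduce ?reduce_ok.
Qed.

Lemma reduce_catl u v : reduce (reduce u ++ v) = reduce (u ++ v).
Proof. by rewrite [RHS]reduce_cat reduce_cat (reduce_id (reduce_ok u)). Qed.

Lemma reduce_catr u v : reduce (u ++ reduce v) = reduce (u ++ v).
Proof. by rewrite [RHS]reduce_cat reduce_cat (reduce_id (reduce_ok v)). Qed.

Lemma reduce_revK u : reduce (rev u ++ u) = [::].
Proof.
elim: u => [|x u IHu] //=.
rewrite rev_cons -cats1 -catA -reduce_catr /=.
by rewrite reduce_consK ?reduce_ok // reduce_catr.
Qed.

Lemma reduce_rev u : reduce (rev (reduce u)) = reduce (rev u).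
Proof.
have reduce_u_cancel : reduce (u ++ rev (reduce u)) = [::].
  by rewrite -reduce_catl -{1}(revK (reduce u)) reduce_revK.
by rewrite -(cats0 (rev u)) -reduce_u_cancel reduce_catr catA -reduce_catl reduce_revK.
Qed.

Lemma reduce_map (f : 'I_n -> 'I_n) u : reduce (map f (reduce u)) = reduce (map f u).
Proof.
elim: u => [|x u IHu] //=; rewrite -IHu.
case: (reduce u) (reduce_ok u) => [|y r] //= reduced_yr.
by case: eqP => [<-|_] //=; rewrite reduce_consK ?reduce_ok.
Qed.

End FreeReduction.

Section Words.
Variable n : nat.
Implicit Types u v w : seq 'I_n.

Lemma zword_val (x : Z2free n) : zword (val x) = x.
Proof. by apply: val_inj; rewrite /= reduce_id //; case: x. Qed.

Lemma zone_word : zone n = zword [::].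
Proof. exact: val_inj. Qed.

Lemma zmul_word u v : zmul (zword u) (zword v) = zword (u ++ v).
Proof. by apply: val_inj; rewrite /= reduce_catl reduce_catr. Qed.

Lemma zinv_word u : zinv (zword u) = zword (rev u).
Proof. by apply: val_inj; rewrite /= reduce_rev. Qed.

Lemma zmap_word (f : 'I_n -> 'I_n) u : zmap f (zword u) = zword (map f u).
Proof. by apply: val_inj; rewrite /= reduce_map. Qed.

Lemma zword_revK u : zword (rev u ++ u) = zword [::].
Proof. by apply: val_inj; rewrite /= reduce_revK. Qed.

Lemma zword_cancel u v w : zword (u ++ rev v ++ v ++ w) = zword (u ++ w).
Proof. by rewrite -zmul_word catA -zmul_word zword_revK !zmul_word. Qed.

End Words.

Section GammaEquality.
Variables (n : nat) (A : Z2free n -> Prop).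
Hypothesis hA : normal_subgroup A.
Implicit Types u v w : seq 'I_n.

Definition gamma_eq u v : Prop := A (zmul (zword u) (zinv (zword v))).

Lemma gamma_eqE u v : gamma_eq u v = A (zword (u ++ rev v)).
Proof. by rewrite /gamma_eq zinv_word zmul_word. Qed.

Lemma gamma_eq_refl u : gamma_eq u u.
Proof.
case: hA => A1 _ _ _.
by rewrite gamma_eqE -[u in u ++ _]revK zword_revK -zone_word.
Qed.

Lemma gamma_eq_sym u v : gamma_eq u v -> gamma_eq v u.
Proof.
case: hA => _ _ AV _.
by rewrite !gamma_eqE => /AV; rewrite zinv_word rev_cat revK.
Qed.

Lemma gamma_eq_trans v u w : gamma_eq u v -> gamma_eq v w -> gamma_eq u w.
Proof.
case: hA => _ AM _ _; rewrite !gamma_eqE => Auv Avw.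
by have := AM _ _ Auv Avw; rewrite zmul_word -catA zword_cancel.
Qed.

Lemma gamma_eq_cat u v u' v' :
  gamma_eq u v -> gamma_eq u' v' -> gamma_eq (u ++ u') (v ++ v').
Proof.
case: hA => _ AM _ AJ; rewrite !gamma_eqE => Auv Auv'.
(* (u u')(v v')^-1 = u (u' v'^-1) u^-1 . (u v^-1) *)
have := AM _ _ (AJ _ (zword (rev u)) Auv') Auv.
rewrite zinv_word revK !zmul_word rev_cat -!catA.
by rewrite (catA u u') (catA (u ++ u')) zword_cancel -!catA.
Qed.

Lemma inGamma_class_gamma_eq u v g : gamma_eq u v ->
  inGamma_class A (zword u) g = inGamma_class A (zword v) g.
Proof.
rewrite -(zword_val g) => uv; apply/asboolP/asboolP => [ug|vg].
  exact: gamma_eq_trans (gamma_eq_sym uv) ug.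
exact: gamma_eq_trans uv vg.
Qed.

Lemma gamma_eq_map (f : 'I_n -> 'I_n) u v :
  (forall x, A x -> A (zmap f x)) -> gamma_eq u v -> gamma_eq (map f u) (map f v).
Proof. by move=> Af; rewrite !gamma_eqE -map_rev -map_cat -zmap_word; apply: Af. Qed.

End GammaEquality.

Lemma eq_map_zip (T1 T2 R : eqType) (f : T1 -> R) (g : T2 -> R) s1 s2 :
  size s1 = size s2 -> (forall p, p \in zip s1 s2 -> f p.1 = g p.2) ->
  map f s1 = map g s2.
Proof.
elim: s1 s2 => [|x s1 IHs] [|y s2] //= [] eq_size fg.
rewrite (fg (x, y)) ?mem_head // (IHs s2) // => p p_s.
by apply: fg; rewrite in_cons p_s orbT.
Qed.

Lemma split_lshift m1 m2 (x : 'I_m1) : split (@lshift m1 m2 x) = inl x.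
Proof. exact: (unsplitK (inl x)). Qed.

Lemma split_rshift m1 m2 (x : 'I_m2) : split (@rshift m1 m2 x) = inr x.
Proof. exact: (unsplitK (inr x)). Qed.

Section GammaCategory.
Variables (n : nat) (adjG : rel 'I_n) (A : Z2free n -> Prop).
Hypothesis hA : normal_subgroup A.

Definition bg_hom (K : bgraph) (phi : 'I_(bg_m K) -> 'I_n) : Prop :=
  forall x y, sadj K x y -> adjG (phi x) (phi y).

Definition gamma_cat (K : bgraph) : Prop :=
  forall phi, bg_hom phi -> gamma_eq A (map phi (bg_out K)) (map phi (bg_in K)).

Lemma gamma_cat_iso K K' : gamma_cat K -> bg_iso K K' -> gamma_cat K'.
Proof.
move=> CK [f [_ adj_f in_f out_f]] phi hom_phi.
rewrite -in_f -out_f -!map_comp; apply: CK => x y xy.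
by apply: hom_phi; rewrite adj_f.
Qed.

Lemma gamma_cat_inv K : gamma_cat K -> gamma_cat (bg_inv K).
Proof. by move=> CK phi hom_phi; apply: (gamma_eq_sym hA); apply: CK. Qed.

Lemma bg_hom_quot K r (q : 'I_(bg_m K) -> 'I_r) (phi : 'I_r -> 'I_n) :
  bg_hom (K := bg_quot K q) phi -> bg_hom (phi \o q).
Proof.
move=> hom_phi x y xy; apply: hom_phi; apply/orP; left.
by apply/existsP; exists x; apply/existsP; exists y; rewrite !eqxx xy.
Qed.

Lemma gamma_cat_quot K r (q : 'I_(bg_m K) -> 'I_r) :
  gamma_cat K -> gamma_cat (bg_quot K q).
Proof. by move=> CK phi /bg_hom_quot hom_phiq; rewrite /= -!map_comp; apply: CK. Qed.

Lemma gamma_cat_tensor K H : gamma_cat K -> gamma_cat H -> gamma_cat (bg_tensor K H).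
Proof.
move=> CK CH phi hom_phi; rewrite /= !map_cat -!map_comp.
apply: gamma_eq_cat => //; [apply: CK | apply: CH] => x y xy; apply: hom_phi;
  by rewrite /sadj /= /dunion_adj ?split_lshift ?split_rshift xy.
Qed.

Lemma gamma_cat_comp H K R :
  gamma_cat H -> gamma_cat K -> is_comp H K R -> gamma_cat R.
Proof.
move=> CH CK [size_bc [r [q [_ q_connect iso_R]]]].
apply: (gamma_cat_iso _ iso_R) => phi /bg_hom_quot hom_phiq.
have glue : map q (map (@lshift _ (bg_m H)) (bg_out K)) =
            map q (map (@rshift (bg_m K) _) (bg_in H)).
  apply: eq_map_zip; first by rewrite !size_map.
  by move=> [x y] xy; apply/eqP; rewrite q_connect connect1 // /comp_rel xy.
rewrite /= -[map phi _]map_comp.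
apply: (@gamma_eq_trans _ _ hA (map phi (map q (map (@lshift _ (bg_m H)) (bg_out K))))).
  rewrite glue -!map_comp; apply: CH => x y xy; apply: hom_phiq.
  by rewrite /sadj /= /dunion_adj !split_rshift xy.
rewrite -!map_comp; apply: CK => x y xy; apply: hom_phiq.
by rewrite /sadj /= /dunion_adj !split_lshift xy.
Qed.

Lemma gamma_cat_group_theoretical : group_theoretical gamma_cat.
Proof.
split; last by move=> K r q _; apply: gamma_cat_quot.
split.
- by move=> K K'; apply: gamma_cat_iso.
- split; [|split] => phi _; try exact: gamma_eq_refl.
  by rewrite gamma_eqE (zword_revK [:: phi ord0]) -zone_word; case: hA.
- exact: gamma_cat_tensor.
- exact: gamma_cat_comp.
- exact: gamma_cat_inv.
Qed.

End GammaCategory.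

Lemma inj_homo_mono (T : finType) (e : rel T) (f : T -> T) :
  injective f -> {homo f : x y / e x y} -> {mono f : x y / e x y}.
Proof.
move=> inj_f homo_f x y.
pose f2 (p : T * T) := (f p.1, f p.2).
have inj_f2 : injective f2 by move=> [? ?] [? ?] [/inj_f -> /inj_f ->].
pose E := [set p : T * T | e p.1 p.2].
have preim_E : f2 @^-1: E = E.
  apply/eqP; rewrite eq_sym eqEcard card_preimset // leqnn andbT.
  by apply/subsetP => -[a b]; rewrite !inE; apply: homo_f.
by have /setP/(_ (x, y)) := preim_E; rewrite !inE.
Qed.

Section AutomorphismAction.
Variable n : nat.
Implicit Types s : {perm 'I_n}.
Local Open Scope group_scope.

Lemma isAut1 (adjG : rel 'I_n) : isAut adjG 1.
Proof. by move=> x y; rewrite !perm1. Qed.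

Lemma isAut_inv (adjG : rel 'I_n) s : isAut adjG s -> isAut adjG s^-1.
Proof. by move=> aut_s x y; rewrite -aut_s !permKV. Qed.

Lemma map_tuple_permK k s (t : k.-tuple 'I_n) : map_tuple s^-1 (map_tuple s t) = t.
Proof. by apply: eq_from_tnth => m; rewrite !tnth_map permK. Qed.

Lemma map_tuple_permKV k s (t : k.-tuple 'I_n) : map_tuple s (map_tuple s^-1 t) = t.
Proof. by apply: eq_from_tnth => m; rewrite !tnth_map permKV. Qed.

Lemma map_tuple_perm1 k (t : k.-tuple 'I_n) : map_tuple (1 : {perm 'I_n}) t = t.
Proof. by apply: eq_from_tnth => m; rewrite tnth_map perm1. Qed.

Lemma eq_map_tuple_perm k s (t u : k.-tuple 'I_n) :
  (map_tuple s t == u) = (t == map_tuple s^-1 u).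
Proof.
by apply/eqP/eqP => [<-|->]; rewrite ?map_tuple_permK ?map_tuple_permKV.
Qed.

End AutomorphismAction.

Local Open Scope ring_scope.

Lemma prod_tnth_eq (R : comPzSemiRingType) (T : eqType) k (p t : k.-tuple T) :
  \prod_(m < k) ((tnth p m == tnth t m)%:R : R) = (p == t)%:R.
Proof.
have [<-|neq_pt] := eqVneq p t; first by rewrite big1 // => m _; rewrite eqxx.
have [m /negbTE neq_m|eq_pt] := pickP (fun m : 'I_k => tnth p m != tnth t m).
  by rewrite (bigD1 m) //= neq_m mul0r.
by case/eqP: neq_pt; apply: eq_from_tnth => m; have /negbFE/eqP := eq_pt m.
Qed.

Lemma sum_mul_delta (R : pzSemiRingType) (I : finType) (F : I -> R) t :
  \sum_i F i * (i == t)%:R = F t.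
Proof.
rewrite (bigD1 t) //= eqxx mulr1 big1 ?addr0 // => i /negbTE ->.
by rewrite mulr0.
Qed.

Section Intertwiners.
Variables (n : nat) (adjG : rel 'I_n) (A : Z2free n -> Prop).
Hypothesis hA : normal_subgroup A.
Implicit Type s : {perm 'I_n}.

Lemma ucoefE k (p i : k.-tuple 'I_n) s g :
  ucoef A p i s g = (inGamma_class A (zword p) g)%:R * (p == map_tuple s i)%:R.
Proof.
by rewrite /ucoef -prod_tnth_eq; under [in RHS]eq_bigr do rewrite tnth_map.
Qed.

Variables k l : nat.
Implicit Type T : l.-tuple 'I_n -> k.-tuple 'I_n -> CC.

Definition aut_invariant T : Prop :=
  forall s, isAut adjG s ->
    forall j i, T (map_tuple s j) (map_tuple s i) = T j i.

Definition gamma_supported T : Prop :=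
  forall j i, T j i != 0 -> gamma_eq A j i.

Lemma sum_ucoef_l T j i s g :
  \sum_p T j p * ucoef A p i s g =
  T j (map_tuple s i) * (inGamma_class A (zword (map_tuple s i)) g)%:R.
Proof.
by under eq_bigr do rewrite ucoefE mulrA; rewrite sum_mul_delta.
Qed.

Lemma sum_ucoef_r T j i s g :
  \sum_q ucoef A j q s g * T q i =
  (inGamma_class A (zword j) g)%:R * T (map_tuple s^-1%g j) i.
Proof.
under eq_bigr do rewrite ucoefE eq_sym eq_map_tuple_perm mulrAC.
by rewrite sum_mul_delta.
Qed.

Lemma MorP T : Mor adjG A T <-> aut_invariant T /\ gamma_supported T.
Proof.
have class_refl u : inGamma_class A (zword u) (zword u).
  by apply/asboolP; apply: gamma_eq_refl.
split=> [MorT | [inv_T supp_T] j i s g aut_s].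
  have {}MorT j i s g : isAut adjG s ->
      T j (map_tuple s i) * (inGamma_class A (zword (map_tuple s i)) g)%:R =
      (inGamma_class A (zword j) g)%:R * T (map_tuple s^-1%g j) i.
    by move=> aut_s; rewrite -sum_ucoef_l -sum_ucoef_r; apply: MorT.
  have supp_T : gamma_supported T.
    move=> j i; have := MorT j i 1%g (zword i) (isAut1 adjG).
    rewrite invg1 !map_tuple_perm1 class_refl mulr1.
    by rewrite /inGamma_class; case: asboolP => [ji _ _ // | _ ->]; rewrite mul0r eqxx.
  split=> // s aut_s j i.
  have := MorT (map_tuple s j) i s (zword (map_tuple s i)) aut_s.
  have := MorT j (map_tuple s i) s^-1%g (zword i) (isAut_inv aut_s).
  rewrite invgK !map_tuple_permK !class_refl !mulr1 => Tji.
  case: (inGamma_class _ _ _) => Tsji; first by rewrite Tsji mul1r.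
  by rewrite Tji Tsji mul0r mulr0.
rewrite sum_ucoef_l sum_ucoef_r.
have -> : T (map_tuple s^-1%g j) i = T j (map_tuple s i).
  by rewrite -{2}(map_tuple_permKV s j) inv_T.
have [->|/supp_T ji] := eqVneq (T j (map_tuple s i)) 0; first by rewrite mul0r mulr0.
by rewrite (inGamma_class_gamma_eq hA g ji) mulrC.
Qed.

End Intertwiners.

Section HomomorphismCounts.
Variables (n : nat) (adjG : rel 'I_n).
Implicit Types (K : bgraph) (s : {perm 'I_n}) (j i a b : seq 'I_n).

Definition inj_homs K j i : {set {ffun 'I_(bg_m K) -> 'I_n}} :=
  [set phi : {ffun 'I_(bg_m K) -> 'I_n} |
    [&& injectiveb phi,
        [forall x, forall y, sadj K x y ==> adjG (phi x) (phi y)],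
        map phi (bg_in K) == i &
        map phi (bg_out K) == j]].

Lemma TGE K j i : TG adjG K j i = #|inj_homs K j i|%:R.
Proof. by []. Qed.

Lemma TG_aut K s j i : isAut adjG s -> TG adjG K (map s j) (map s i) = TG adjG K j i.
Proof.
move=> aut_s; rewrite !TGE; congr (_%:R).
pose s_phi (phi : {ffun 'I_(bg_m K) -> 'I_n}) := [ffun x => s (phi x)].
have inj_s_phi : injective s_phi.
  move=> f g /ffunP eq_fg; apply/ffunP => x.
  by apply: (@perm_inj _ s); have := eq_fg x; rewrite !ffunE.
rewrite -(card_preimset _ inj_s_phi); apply: eq_card => phi; rewrite !inE.
have map_s_phi u : map (s_phi phi) u = map s (map phi u).
  by rewrite -map_comp; apply: eq_map => x; rewrite ffunE.
rewrite !map_s_phi !(inj_eq (inj_map (@perm_inj _ s))).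
congr [&& _, _, _ & _].
  apply/injectiveP/injectiveP => inj_phi x y.
    by move=> eq_xy; apply: inj_phi; rewrite !ffunE eq_xy.
  by rewrite !ffunE => /perm_inj /inj_phi.
by apply: eq_forallb => x; apply: eq_forallb => y; rewrite !ffunE aut_s.
Qed.

Lemma TG_gamma_supported (A : Z2free n -> Prop) K j i :
  gamma_cat adjG A K -> TG adjG K j i != 0 -> gamma_eq A j i.
Proof.
rewrite TGE pnatr_eq0 -lt0n => CK /card_gt0P[phi].
rewrite inE => /and4P[_ /forallP hom_phi /eqP <- /eqP <-].
by apply: CK => x y xy; have /forallP/(_ y)/implyP := hom_phi x; apply.
Qed.

Definition AutG : {set {perm 'I_n}} :=
  [set s : {perm 'I_n} | [forall x, forall y, adjG (s x) (s y) == adjG x y]].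

Lemma AutGP s : reflect (isAut adjG s) (s \in AutG).
Proof.
rewrite inE; apply: (iffP forallP) => [aut_s x y | aut_s x].
  by have /forallP/(_ y)/eqP := aut_s x.
by apply/forallP => y; rewrite aut_s.
Qed.

Definition bgG a b : bgraph := BGraph adjG a b.

Hypothesis symG : symmetric adjG.

Lemma TG_bgG a b j i :
  TG adjG (bgG a b) j i = \sum_(s in AutG) ((map s a == i) && (map s b == j))%:R.
Proof.
pose ffun_of_perm s : {ffun 'I_n -> 'I_n} := [ffun x => s x].
have inj_ffun : injective ffun_of_perm.
  by move=> s t /ffunP eq_st; apply/permP => x; have := eq_st x; rewrite !ffunE.
rewrite TGE; have -> : inj_homs (bgG a b) j i =
    ffun_of_perm @: [set s in AutG | (map s a == i) && (map s b == j)].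
  apply/setP => phi; rewrite inE; apply/idP/imsetP.
    case/and4P => /injectiveP inj_phi /forallP hom_phi a_i b_j.
    exists (perm inj_phi); last by apply/ffunP => x; rewrite ffunE permE.
    have map_perm u : map (perm inj_phi) u = map phi u.
      by apply: eq_map => x; rewrite permE.
    rewrite inE !map_perm a_i b_j !andbT; apply/AutGP => x y; rewrite !permE.
    apply: (inj_homo_mono inj_phi) => x' y' xy'.
    by have /forallP/(_ y')/implyP := hom_phi x'; apply; rewrite /sadj /= xy'.
  case=> s; rewrite inE => /andP[/AutGP aut_s /andP[a_i b_j]] ->.
  have map_ffun u : map (ffun_of_perm s) u = map s u by apply: eq_map => x; rewrite ffunE.
  rewrite /= !map_ffun a_i b_j !andbT; apply/andP; split.
    by apply/injectiveP => x y; rewrite !ffunE; apply: perm_inj.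
  apply/forallP => x; apply/forallP => y; apply/implyP.
  by rewrite !ffunE /sadj /= aut_s (symG y x) orbb.
rewrite (card_imset _ inj_ffun) -sum1_card natr_sum [LHS]big_mkcond [RHS]big_mkcond.
by apply: eq_bigr => s _; rewrite inE; case: (s \in AutG) => //=; case: (_ && _).
Qed.

End HomomorphismCounts.

Section Spanning.
Variables (n : nat) (adjG : rel 'I_n) (A : Z2free n -> Prop).
Hypothesis hA : normal_subgroup A.
Variables k l : nat.
Implicit Type T : l.-tuple 'I_n -> k.-tuple 'I_n -> CC.

Lemma CG_sum (C : bgraph -> Prop) (I : finType) (S : {pred I}) (c : I -> CC)
    (Ks : I -> bgraph) T :
  (forall p, p \in S -> C (Ks p) /\ inC k l (Ks p)) ->
  (forall (j : l.-tuple 'I_n) (i : k.-tuple 'I_n),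
     T j i = \sum_(p in S) c p * TG adjG (Ks p) (val j) (val i)) ->
  CG adjG C T.
Proof.
move=> CKs eq_T; exists #|S|, (c \o enum_val), (Ks \o enum_val); split.
  by move=> x; apply/CKs/enum_valP.
by move=> j i; rewrite eq_T (big_enum_val (fun p => c p * TG adjG (Ks p) (val j) (val i))).
Qed.

Hypothesis symG : symmetric adjG.

Lemma aut_average T (j : l.-tuple 'I_n) (i : k.-tuple 'I_n) :
  aut_invariant adjG T ->
  \sum_(p : l.-tuple 'I_n * k.-tuple 'I_n)
    T p.1 p.2 / #|AutG adjG|%:R * TG adjG (bgG adjG p.2 p.1) j i = T j i.
Proof.
move=> inv_T; set N := #|AutG adjG|%:R.
under eq_bigr do rewrite (TG_bgG symG) mulr_sumr.
rewrite exchange_big (eq_bigr (fun=> T j i / N)) => [|s /AutGP aut_s]; last first.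
  rewrite -(inv_T _ (isAut_inv aut_s) j i).
  rewrite -(sum_mul_delta (fun p => T p.1 p.2 / N) (map_tuple s^-1%g j, map_tuple s^-1%g i)).
  apply: eq_bigr => -[p1 p2] _ /=; congr (_ * _%:R).
  by rewrite xpair_eqE -!eq_map_tuple_perm andbC.
have N_neq0 : N != 0.
  by rewrite pnatr_eq0 -lt0n; apply/card_gt0P; exists 1%g; apply/AutGP/isAut1.
by rewrite sumr_const -mulr_natr divfK.
Qed.

Lemma CG_Mor T : CG adjG (gamma_cat adjG A) T -> Mor adjG A T.
Proof.
case=> N [c [Ks [CKs eq_T]]]; apply/(MorP _ hA); split=> [s aut_s j i | j i].
  by rewrite !eq_T; apply: eq_bigr => x _ /=; rewrite TG_aut.
rewrite eq_T => sum_neq0.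
have [x /= term_neq0 | /= terms0] := pickP (fun x => c x * TG adjG (Ks x) j i != 0).
  apply: (TG_gamma_supported (proj1 (CKs x))).
  by apply: contraNneq term_neq0 => ->; rewrite mulr0.
by case/eqP: sum_neq0; apply: big1 => x _; apply/eqP/negbFE/terms0.
Qed.

Hypothesis hEnd : End_invariant adjG A.

Lemma Mor_CG T : Mor adjG A T -> CG adjG (gamma_cat adjG A) T.
Proof.
case/(MorP _ hA) => inv_T supp_T.
apply: (@CG_sum _ _ [pred p | T p.1 p.2 != 0]
          (fun p => T p.1 p.2 / #|AutG adjG|%:R) (fun p => bgG adjG p.2 p.1))
  => [p /supp_T Tp | j i].
  split; last by rewrite /inC !size_tuple !eqxx.
  move=> phi hom_phi; apply: (gamma_eq_map _ Tp); apply: hEnd => x y xy.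
  by apply: hom_phi; rewrite /sadj /= xy.
rewrite -[LHS](aut_average j i inv_T) [RHS]big_mkcond; apply: eq_bigr => p _.
by rewrite inE; have [->|] := eqVneq (T p.1 p.2) 0; rewrite ?mul0r.
Qed.

End Spanning.

Unset Implicit Arguments.
Local Close Scope ring_scope.

Theorem proposition5p5 (n : nat) (adjG : rel 'I_n) (symG : symmetric adjG)
  (A : Z2free n -> Prop) (hA : normal_subgroup A) (hEnd : End_invariant adjG A) :
  exists C : bgraph -> Prop,
    group_theoretical C /\
    forall (k l : nat) (T : l.-tuple 'I_n -> k.-tuple 'I_n -> CC),
      CG adjG C T <-> Mor adjG A T.
Proof.
exists (gamma_cat adjG A); split; first exact: gamma_cat_group_theoretical.
by move=> k l T; split; [apply: CG_Mor | apply: Mor_CG].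
Qed.
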